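(* Let $\mathcal C$ be an $(n,k,r,3)$-SLRC, let $G=([n],\mathcal E)$ be a minimal repair graph of $\mathcal C$, and let $B$, $C_1$ and $\mathcal E_{\mathrm{blue}}$ be as defined in the context. Then $$|\mathcal E_{\mathrm{blue}}|\ge\frac{|B|+|C_1|}{r}.$$
   Context: For an $[n,k]$ linear code $\mathcal C$ over a finite field $\mathbb F$, a recovering set of $i\in[n]$ is a set $R\subseteq[n]\setminus\{i\}$ with nonzero $a_j\in\mathbb F$ such that $x_i=\sum_{j\in R}a_jx_j$ for all $x\in\mathcal C$; standing assumption: recovering sets have size $2\le|R|\le r<k$. $\mathcal C$ is an $(n,k,r,t)$-SLRC if every $E\subseteq[n]$ with $|E|\le t$ can be indexed $\{i_1,\dots,i_{|E|}\}$ so that each $i_\ell$ has a recovering set $R_\ell\subseteq([n]\setminus E)\cup\{i_1,\dots,i_{\ell-1}\}$. A repair graph of $\mathcal C$ is a directed acyclic graph on vertex set $[n]$ such that for every vertex $i$ with nonempty in-neighbourhood $\mathrm{In}(i)$, $\mathrm{In}(i)$ is a recovering set of $i$. A source is a vertex with no in-neighbours; $S(G)$ is the set of sources. A minimal repair graph is a repair graph with the minimum number of sources among all repair graphs of $\mathcal C$. $\mathrm{Out}(v)$ is the set of out-neighbours of $v$ and $\mathrm{Out}^2(v)=\bigcup_{u\in\mathrm{Out}(v)}\mathrm{Out}(u)\setminus\mathrm{Out}(v)$. Define $B=\{v\in S(G):|\mathrm{Out}(v)|=2\}$, $C_1=\{v\in S(G):|\mathrm{Out}(v)|=1,\ |\mathrm{Out}^2(v)|=1\}$,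 $C_2=\{v\in S(G):|\mathrm{Out}(v)|=1,\ |\mathrm{Out}^2(v)|\ge2\}$. An edge is green if its tail is the unique out-neighbour of some source in $C_1\cup C_2$. For $v\in B\cup C_1$, a non-green edge $e$ is a blue edge belonging to $v$ if either $v\in B$ and the tail of $e$ lies in $\mathrm{Out}(v)$, or $v\in C_1$ and the tail of $e$ lies in $\mathrm{Out}^2(v)$. $\mathcal E_{\mathrm{blue}}$ is the set of all edges that are blue edges belonging to some $v\in B\cup C_1$. *)

From HB Require Import structures.
From mathcomp Require Import all_boot all_order all_algebra.
Set Implicit Arguments. Unset Strict Implicit. Unset Printing Implicit Defensive.
Import GRing.Theory.
Local Open Scope ring_scope.

Section SLRC.
Variables (F : finFieldType) (n : nat).

(* A linear code of length n is a subspace C of F^n = 'rV[F]_n;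
   its dimension is \dim C.  Coordinate i of x is x 0 i. *)

Definition recovering_set (C : {vspace 'rV[F]_n}) (r : nat) (i : 'I_n)
    (R : {set 'I_n}) : Prop :=
  [/\ i \notin R, (2 <= #|R|)%N, (#|R| <= r)%N &
   exists a : 'I_n -> F, (forall j, j \in R -> a j != 0) /\
     (forall x, x \in C -> x 0 i = \sum_(j in R) a j * x 0 j)].

Definition SLRC (C : {vspace 'rV[F]_n}) (k r t : nat) : Prop :=
  \dim C = k /\
  forall E : {set 'I_n}, (#|E| <= t)%N ->
    exists s : seq 'I_n, [/\ uniq s, [set x in s] = E &
      forall (s1 s2 : seq 'I_n) (i : 'I_n), s = s1 ++ i :: s2 ->
        exists R, recovering_set C r i R /\
          R \subset (~: E) :|: [set x in s1]].

(* Directed graphs on [n]: a set of edges (tail, head). *)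
Definition grel (G : {set 'I_n * 'I_n}) : rel 'I_n := fun u v => (u, v) \in G.
Definition acyclic (G : {set 'I_n * 'I_n}) : Prop :=
  forall u v, (u, v) \in G -> ~~ connect (grel G) v u.
Definition In_ (G : {set 'I_n * 'I_n}) (i : 'I_n) : {set 'I_n} :=
  [set j | (j, i) \in G].
Definition Out (G : {set 'I_n * 'I_n}) (v : 'I_n) : {set 'I_n} :=
  [set u | (v, u) \in G].
Definition Out2 (G : {set 'I_n * 'I_n}) (v : 'I_n) : {set 'I_n} :=
  (\bigcup_(u in Out G v) Out G u) :\: Out G v.
Definition sources (G : {set 'I_n * 'I_n}) : {set 'I_n} :=
  [set v | In_ G v == set0].

Definition repair_graph (C : {vspace 'rV[F]_n}) (r : nat)
    (G : {set 'I_n * 'I_n}) : Prop :=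
  acyclic G /\
  forall i, In_ G i != set0 -> recovering_set C r i (In_ G i).

Definition minimal_repair_graph (C : {vspace 'rV[F]_n}) (r : nat)
    (G : {set 'I_n * 'I_n}) : Prop :=
  repair_graph C r G /\
  forall G', repair_graph C r G' -> (#|sources G| <= #|sources G'|)%N.

Definition Bset (G : {set 'I_n * 'I_n}) : {set 'I_n} :=
  [set v in sources G | #|Out G v| == 2].
Definition C1set (G : {set 'I_n * 'I_n}) : {set 'I_n} :=
  [set v in sources G | (#|Out G v| == 1) && (#|Out2 G v| == 1)].
Definition C2set (G : {set 'I_n * 'I_n}) : {set 'I_n} :=
  [set v in sources G | (#|Out G v| == 1) && (2 <= #|Out2 G v|)%N].

Definition green (G : {set 'I_n * 'I_n}) (e : 'I_n * 'I_n) : bool :=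
  (e \in G) && [exists v in C1set G :|: C2set G, Out G v == [set e.1]].

Definition blue_of (G : {set 'I_n * 'I_n}) (v : 'I_n) (e : 'I_n * 'I_n) : bool :=
  [&& e \in G, ~~ green G e &
    ((v \in Bset G) && (e.1 \in Out G v)) ||
    ((v \in C1set G) && (e.1 \in Out2 G v))].

Definition Eblue (G : {set 'I_n * 'I_n}) : {set 'I_n * 'I_n} :=
  [set e | [exists v in Bset G :|: C1set G, blue_of G v e]].

End SLRC.

From Pilot Require Import Defs.
From HB Require Import structures.
From mathcomp Require Import all_boot all_order all_algebra.
From Stdlib Require Import IndefiniteDescription.
Set Implicit Arguments. Unset Strict Implicit. Unset Printing Implicit Defensive.

(* Exchange argument: if a set E of at most three vertices of the minimal
   repair graph G can only be left along edges into a set A, then G has at most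
   |A| sources in E.  Indeed the SLRC property orders E so that each vertex of E
   is recovered from outside E and from earlier vertices of E; turning the
   vertices of E into repaired vertices and those of A into sources gives a
   repair graph, and minimality compares the numbers of sources.

   A source v in B without blue edge has both out-neighbours either sinks or
   fed by sources of C1 or C2; E = {v} plus these sinks and feeders, with A the
   fed vertices, violates the bound.  The same works for v in C1 one step
   further out, and shows that distinct sources never share a singleton
   out-neighbourhood.  Charging each v in B or C1 to one of its blue edges e,
   the map sending v to itself (v in B) or to its out-neighbour (v in C1) is
   injective and lands in In(tail e), a recovering set of size at most r. *)

Lemma card_le_fibers (T U : finType) (V : {set T}) (W : {set U}) (f : T -> U)
    (m : nat) :
  {in V, forall x, f x \in W} ->
  {in W, forall y, #|[set x in V | f x == y]| <= m} ->
  #|V| <= #|W| * m.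
Proof.
move=> fVW fib_le; rewrite -sum1_card (partition_big f (mem W)) //=.
rewrite -sum_nat_const; apply: leq_sum => y Wy.
by rewrite -(eq_bigl _ _ (fun x => in_set _ _)) /= sum1_card fib_le.
Qed.

Lemma index_lt_prefix (T : eqType) (s1 s2 : seq T) (x y : T) :
  uniq (s1 ++ x :: s2) -> y \in s1 ->
  index y (s1 ++ x :: s2) < index x (s1 ++ x :: s2).
Proof.
rewrite cat_uniq /= => /and4P [_ /norP [xNs1 _] _ _] ys1.
by rewrite !index_cat ys1 (negbTE xNs1) /= eqxx addn0 index_mem.
Qed.

Section RepairGraphOfRank.
Variables (F : finFieldType) (n : nat) (C : {vspace 'rV[F]_n}) (r : nat).

Lemma connect_rank_le (G : {set 'I_n * 'I_n}) (o : 'I_n -> nat) :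
  (forall u v, (u, v) \in G -> o u < o v) ->
  forall x y, connect (Defs.grel G) x y -> o x <= o y.
Proof.
move=> o_lt x y /connectP [p xp ->] {y}; elim: p x xp => [|z p IHp] x //=.
by case/andP=> /o_lt/ltnW xz /IHp; apply: leq_trans.
Qed.

Lemma repair_graph_of_rank (S : {set 'I_n}) (o : 'I_n -> nat) :
  (forall i, i \notin S -> exists R,
     recovering_set C r i R /\ {in R, forall j, o j < o i}) ->
  exists G, repair_graph C r G /\ sources G \subset S.
Proof.
move=> recS.
have [Rf RfP] : exists Rf : 'I_n -> {set 'I_n}, forall i, i \notin S ->
    recovering_set C r i (Rf i) /\ {in Rf i, forall j, o j < o i}.
  apply: (functional_choice (fun i R => i \notin S ->
    recovering_set C r i R /\ {in R, forall j, o j < o i})) => i.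
  by case: (boolP (i \in S)) => [iS|/recS [R ?]]; [exists set0 | exists R].
pose G := [set e : 'I_n * 'I_n | (e.2 \notin S) && (e.1 \in Rf e.2)].
have InG i : In_ G i = if i \in S then set0 else Rf i.
  by apply/setP => j; rewrite !inE /=; case: (i \in S); rewrite ?inE.
have o_lt u v : (u, v) \in G -> o u < o v.
  by rewrite inE /= => /andP [/RfP [_ lt_o] /lt_o].
exists G; split; first split.
- move=> u v /o_lt uv; apply/negP => /(connect_rank_le o_lt) vu.
  by have := leq_trans uv vu; rewrite ltnn.
- by move=> i; rewrite InG; case: ifPn => [_|/RfP [] //]; rewrite eqxx.
- apply/subsetP => i; rewrite inE InG; case: ifPn => // /RfP [[_ R2 _ _] _].
  by move/eqP=> R0; move: R2; rewrite R0 cards0.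
Qed.

End RepairGraphOfRank.

Lemma SLRC_recovery_rank (F : finFieldType) (n k r t : nat)
    (C : {vspace 'rV[F]_n}) (E : {set 'I_n}) :
  SLRC C k r t -> #|E| <= t ->
  exists o : 'I_n -> nat, forall i, i \in E -> exists R,
    recovering_set C r i R /\ {in R, forall j, j \in E -> o j < o i}.
Proof.
case=> _ /(_ E) SLRC_E /SLRC_E [s [s_uniq sE s_rec]].
exists (index^~ s) => i iE; have i_s : i \in s by rewrite -sE inE in iE.
have [s1 [s2 def_s]] : exists s1 s2, s = s1 ++ i :: s2.
  by case/splitPr: i_s => s1 s2; exists s1, s2.
have [R [Rrec /subsetP RE]] := s_rec _ _ _ def_s.
exists R; split=> // j /RE; rewrite !inE => /orP [/negP jNE //|js1] _.
by rewrite def_s index_lt_prefix // -def_s.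
Qed.

Section RepairGraph.
Variables (n : nat) (G : {set 'I_n * 'I_n}).

Lemma OutE v u : (u \in Out G v) = ((v, u) \in G).
Proof. by rewrite inE. Qed.

Lemma source_no_in s w : s \in sources G -> (w, s) \notin G.
Proof.
rewrite inE => /eqP Ins0; apply/negP => ws.
by have := in_set0 w; rewrite -Ins0 inE ws.
Qed.

Lemma C12set_sources : C1set G :|: C2set G \subset sources G.
Proof. by apply/subsetP => v; rewrite !inE -andb_orr => /andP []. Qed.

Lemma C12set_Out1 s : s \in C1set G :|: C2set G -> #|Out G s| = 1.
Proof. by rewrite !inE -andb_orr => /andP [_ /orP [] /andP [/eqP]]. Qed.

Lemma no_blue_absorbed v x : (forall e, ~~ blue_of G v e) ->
  ((v \in Bset G) && (x \in Out G v)) || ((v \in C1set G) && (x \in Out2 G v)) ->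
  Out G x = set0 \/ exists2 s, s \in C1set G :|: C2set G & Out G s = [set x].
Proof.
move=> noblue vx; case: (set_0Vmem (Out G x)) => [-> | [w]]; first by left.
rewrite OutE => xw; have : green G (x, w).
  by apply: contraNT (noblue (x, w)) => ngreen; rewrite /blue_of xw ngreen.
by case/andP => _ /existsP [s /andP [sC /eqP Os]]; right; exists s.
Qed.

Lemma Bset_C1set_disjoint : Bset G :&: C1set G = set0.
Proof.
apply/setP => v; rewrite !inE; apply/negP.
by case/andP => /andP [_ /eqP ->] /and3P [].
Qed.

Lemma C1set_notin_Bset v : v \in C1set G -> v \notin Bset G.
Proof.
by move=> vC1; apply/negP => vB; have := in_set0 v; rewrite -Bset_C1set_disjoint inE vB vC1.
Qed.

Definition hub v := if v \in Bset G then v else odflt v [pick u in Out G v].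

Lemma hubP v : v \in Bset G :|: C1set G ->
  v \in Bset G /\ hub v = v \/ v \in C1set G /\ Out G v = [set hub v].
Proof.
rewrite /hub; case/setUP => [vB | vC1]; first by left; rewrite vB.
right; rewrite (negbTE (C1set_notin_Bset vC1)); split=> //.
have := vC1; rewrite inE => /andP [_ /andP [/cards1P [u Ov] _]].
by case: pickP => [x|/(_ u)]; rewrite Ov inE ?eqxx // => /eqP ->.
Qed.

Variables (F : finFieldType) (k r : nat) (C : {vspace 'rV[F]_n}).
Hypothesis C_SLRC : SLRC C k r 3.
Hypothesis G_min : minimal_repair_graph C r G.

Lemma edge_irrefl x : (x, x) \notin G.
Proof.
by apply/negP => /(proj1 (proj1 G_min)); rewrite connect0.
Qed.

Lemma Out2_of_Out1 v u : Out G v = [set u] -> Out2 G v = Out G u.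
Proof.
move=> Ov; rewrite /Out2 Ov big_set1; apply/setP => w; rewrite !inE.
by case: eqP => // ->; rewrite (negbTE (edge_irrefl u)).
Qed.

Definition ancestors i := [set j | connect (Defs.grel G) j i].

Lemma card_ancestors_lt j i : (j, i) \in G -> #|ancestors j| < #|ancestors i|.
Proof.
move=> ji; apply/proper_card/properP; split.
  by apply/subsetP => x; rewrite !inE => /connect_trans; apply; apply: connect1.
by exists i; rewrite inE ?connect0 //; apply: (proj1 (proj1 G_min)).
Qed.

Lemma card_sourcesI_le (E A : {set 'I_n}) : #|E| <= 3 ->
  {in E, forall x, Out G x \subset E :|: A} ->
  #|sources G :&: E| <= #|A|.
Proof.
move=> E3 E_closed.
have [o o_rec] := SLRC_recovery_rank C_SLRC E3.
pose S' := (sources G :\: E) :|: A.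
(* Vertices of E come after all others, in the SLRC order; the others are
   ranked topologically. *)
pose o' i := if i \in E then n.+1 + o i else #|ancestors i|.
have anc_le j : #|ancestors j| <= n by apply: leq_trans (max_card _) _; rewrite card_ord.
have [G' [G'_rep G'_src]] : exists G', repair_graph C r G' /\ sources G' \subset S'.
  apply: (repair_graph_of_rank (o := o')) => i iNS'.
  case: (boolP (i \in E)) => iE.
    have [R [Rrec o_lt]] := o_rec i iE; exists R; split=> // j jR.
    rewrite /o' iE; case: ifPn => jE; first by rewrite ltn_add2l o_lt.
    by rewrite ltnS (leq_trans (anc_le j)) ?leq_addr.
  have iNS : i \notin sources G by apply: contra iNS'; rewrite !inE iE => ->.
  have Ini : In_ G i != set0 by rewrite inE in iNS.
  exists (In_ G i); split; first exact: (proj2 (proj1 G_min)).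
  move=> j; rewrite inE => ji; have jNE : j \notin E.
    apply/negP => /E_closed/subsetP/(_ i); rewrite OutE => /(_ ji).
    by rewrite inE (negbTE iE) /= => iA; move: iNS'; rewrite inE iA orbT.
  by rewrite /o' (negbTE iE) (negbTE jNE) card_ancestors_lt.
have := leq_trans ((proj2 G_min) _ G'_rep) (subset_leq_card G'_src).
rewrite -(cardsID E (sources G)) => /leq_trans/(_ (leq_of_leqif (leq_card_setU _ _))).
by rewrite addnC leq_add2l.
Qed.

Lemma absorbed_frontier_false (P U : {set 'I_n}) (v : 'I_n) :
  v \in P -> v \in sources G -> #|P| + #|U| <= 3 ->
  {in P, forall x, Out G x \subset P :|: U} ->
  {in U, forall u, Out G u = set0 \/
     exists2 s, s \in sources G :\: P & Out G s = [set u]} ->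
  False.
Proof.
move=> vP vS PU3 P_closed U_absorbed.
pose A := [set u in U | Out G u != set0].
have AU : A \subset U by apply/subsetP => u; rewrite inE => /andP [].
pose feeder u := odflt u [pick s in sources G :\: P | Out G s == [set u]].
have feederP u : u \in A ->
    feeder u \in sources G :\: P /\ Out G (feeder u) = [set u].
  rewrite inE => /andP [uU Ou0]; rewrite /feeder.
  case: pickP => [s /andP [sSP /eqP] //|none].
  case: (U_absorbed u uU) => [Ou|[s sSP Os]]; first by rewrite Ou eqxx in Ou0.
  by have := none s; rewrite sSP Os eqxx.
have feeder_inj : {in A &, injective feeder}.
  move=> u u' /feederP [_ Ou] /feederP [_ Ou'] eq_f.
  by apply/set1P; rewrite -Ou' -eq_f Ou set11.
(* The feeders and v are sources in E, one more than the vertices of A. *)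
pose E := P :|: (U :\: A) :|: feeder @: A.
have E3 : #|E| <= 3.
  apply: leq_trans (leq_card_setU _ _) _; rewrite card_in_imset //.
  apply: leq_trans (leq_add (leq_card_setU _ _) (leqnn _)) _.
  by rewrite -addnA cardsD (setIidPr AU) subnK ?subset_leq_card.
have E_closed : {in E, forall x, Out G x \subset E :|: A}.
  move=> x; rewrite !inE -orbA => /or3P [xP | /andP [xNA xU] | /imsetP [u uA ->]].
  - apply/subsetP => y /(subsetP (P_closed x xP)); rewrite !inE.
    by case/orP => ->; rewrite ?orbT //=; case: (Out G y != set0); rewrite ?orbT.
  - by move: xNA; rewrite xU negbK => /eqP ->; apply: sub0set.
  - by rewrite (proj2 (feederP u uA)) sub1set inE uA orbT.
have := card_sourcesI_le E3 E_closed; apply/negP; rewrite -ltnNge.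
have vNf : v \notin feeder @: A.
  by apply/imsetP => -[u /feederP [] /setDP [_ /negP uNP] _ vu]; apply: uNP; rewrite -vu.
have sub : v |: feeder @: A \subset sources G :&: E.
  apply/subsetP => x /setU1P [-> | xf]; rewrite in_setI /E !in_setU.
    by rewrite vS vP.
  rewrite xf !orbT andbT.
  by case/imsetP: xf => u /feederP [/setDP []] ? _ _ ->.
by apply: leq_trans (subset_leq_card sub); rewrite cardsU1 vNf card_in_imset.
Qed.

Lemma source_Out1_inj v v' u : v \in sources G -> v' \in sources G ->
  Out G v = [set u] -> Out G v' = [set u] -> v = v'.
Proof.
move=> vS v'S Ov Ov'; apply/eqP/negPn/negP => vv'.
apply: (absorbed_frontier_false (P := [set v]) (U := [set u]) (set11 v) vS).
- by rewrite !cards1.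
- by move=> x /set1P ->; rewrite Ov subsetUr.
- move=> _ /set1P ->; right; exists v' => //.
  by rewrite in_setD1 v'S eq_sym vv'.
Qed.

Lemma Bset_has_blue v : v \in Bset G -> exists e, blue_of G v e.
Proof.
move=> vB; apply/existsP/contraT => /existsPn noblue; exfalso.
have := vB; rewrite inE => /andP [vS /eqP Ov2].
apply: (absorbed_frontier_false (P := [set v]) (U := Out G v) (set11 v) vS).
- by rewrite cards1 Ov2.
- by move=> x /set1P ->; rewrite subsetUr.
move=> u uv; have : (v \in Bset G) && (u \in Out G v) || (v \in C1set G) && (u \in Out2 G v).
  by rewrite vB uv.
case/(no_blue_absorbed noblue) => [->|[s sC Os]]; first by left.
right; exists s; rewrite // in_setD1 (subsetP C12set_sources) // andbT.
by apply/eqP => def_s; move: (C12set_Out1 sC); rewrite def_s Ov2.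
Qed.

Lemma C1set_has_blue v : v \in C1set G -> exists e, blue_of G v e.
Proof.
move=> vC1; apply/existsP/contraT => /existsPn noblue; exfalso.
have := vC1; rewrite inE => /andP [vS /andP [/cards1P [u Ov] Ou1]].
rewrite (Out2_of_Out1 Ov) in Ou1.
apply: (absorbed_frontier_false (P := [set v; u]) (U := Out G u) _ vS).
- by rewrite !inE eqxx.
- by rewrite cards2 (eqP Ou1); case: (v != u).
- move=> x /set2P [] ->; last by rewrite subsetUr.
  by rewrite Ov sub1set !inE eqxx orbT.
move=> a au; have : (v \in Bset G) && (a \in Out G v) || (v \in C1set G) && (a \in Out2 G v).
  by rewrite vC1 (Out2_of_Out1 Ov) au orbT.
case/(no_blue_absorbed noblue) => [->|[s sC Os]]; first by left.
have sS := subsetP C12set_sources s sC.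
right; exists s => //; rewrite in_setD sS andbT !inE negb_or.
apply/andP; split; apply/eqP => def_s.
  have ua : u = a by apply: set1_inj; rewrite -Ov -Os def_s.
  by move: au; rewrite -ua OutE (negbTE (edge_irrefl u)).
by have := source_no_in v sS; rewrite def_s -OutE Ov set11.
Qed.

Lemma hub_edge v e : v \in Bset G :|: C1set G -> blue_of G v e ->
  (hub v, e.1) \in G.
Proof.
move=> /hubP [[vB ->] | [vC1 Ov]] /and3P [_ _].
  by case/orP => /andP [] => [_ | /C1set_notin_Bset]; rewrite -?OutE ?vB.
by rewrite vC1 (negbTE (C1set_notin_Bset vC1)) (Out2_of_Out1 Ov) /= OutE.
Qed.

Lemma hub_inj : {in Bset G :|: C1set G &, injective hub}.
Proof.
have src w : w \in Bset G :|: C1set G -> w \in sources G.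
  by case/setUP; rewrite inE => /andP [].
have hub_in_Out w w' : w \in Bset G :|: C1set G -> hub w = w ->
    Out G w' = [set hub w] -> False.
  move=> wV hw Ow'; have := source_no_in w' (src w wV).
  by rewrite -OutE Ow' hw set11.
move=> v v' vV v'V; case: (hubP vV) (hubP v'V) => [[_ hv]|[_ Ov]] [[_ hv']|[_ Ov']] eq_h.
- by rewrite -hv -hv' eq_h.
- by case: (hub_in_Out v v' vV hv); rewrite Ov' eq_h.
- by case: (hub_in_Out v' v v'V hv'); rewrite Ov eq_h.
- by apply: source_Out1_inj (src v vV) (src v' v'V) Ov _; rewrite Ov' eq_h.
Qed.

Lemma card_In_le i : In_ G i != set0 -> #|In_ G i| <= r.
Proof. by move/(proj2 (proj1 G_min)) => [_ _ ->]. Qed.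

Lemma card_BC1set_le : #|Bset G :|: C1set G| <= #|Eblue G| * r.
Proof.
set V := Bset G :|: C1set G.
pose blue v := odflt (v, v) [pick e | blue_of G v e].
have blueP v : v \in V -> blue_of G v (blue v).
  move=> vV; rewrite /blue; case: pickP => [//|none].
  have [e] : exists e, blue_of G v e.
    by case/setUP: vV => [/Bset_has_blue | /C1set_has_blue].
  by rewrite none.
apply: (card_le_fibers (f := blue)) => [v vV | e _].
  by rewrite inE; apply/existsP; exists v; rewrite vV blueP.
set fib := [set v in V | blue v == e].
have fibP v : v \in fib -> v \in V /\ blue_of G v e.
  by rewrite inE => /andP [vV /eqP <-]; split; last apply: blueP.
have hub_fib : hub @: fib \subset In_ G e.1.
  by apply/subsetP => _ /imsetP [v /fibP [vV ve] ->]; rewrite inE hub_edge.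
rewrite -(card_in_imset (sub_in2 _ hub_inj)); last by move=> v /fibP [].
case: (set_0Vmem fib) => [-> | [v vfib]]; first by rewrite imset0 cards0.
apply: leq_trans (subset_leq_card hub_fib) (card_In_le _).
by apply/set0Pn; exists (hub v); apply: (subsetP hub_fib); apply: imset_f.
Qed.

End RepairGraph.

Import GRing.Theory Num.Theory.
Local Open Scope ring_scope.

Theorem lemma6 (F : finFieldType) (n k r : nat) (C : {vspace 'rV[F]_n})
    (G : {set 'I_n * 'I_n}) :
  (r < k)%N ->
  SLRC C k r 3 ->
  minimal_repair_graph C r G ->
  ((#|Bset G| + #|C1set G|)%:R / r%:R : rat) <= (#|Eblue G|)%:R.
Proof.
move=> _ C_SLRC G_min.
have := card_BC1set_le C_SLRC G_min.
rewrite -cardsUI Bset_C1set_disjoint cards0 addn0.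
case: r {C_SLRC G_min} => [_|r BC1_le]; first by rewrite invr0 mulr0 ler0n.
by rewrite ler_pdivrMr ?ltr0n // -natrM ler_nat.
Qed.
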